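(* Let $G$ be a connected chordal graph that is not complete. Then $\kappa(G)=a(G)$ if and only if $G$ has a minimal separator $S$ such that every vertex of $S$ is a universal vertex of $G$.
   Context: All graphs are finite, simple and undirected. A graph is chordal if every cycle of length at least four has a chord. The Laplacian matrix of $G$ is $L(G)=D(G)-A(G)$, where $D(G)$ is the diagonal matrix of vertex degrees and $A(G)$ the adjacency matrix; its eigenvalues are $\mu_1(G)\ge\dots\ge\mu_n(G)=0$. The algebraic connectivity is $a(G)=\mu_{n-1}(G)$. A set $S\subset V$ is a separator of $G$ if at least two vertices lying in the same connected component of $G$ lie in distinct connected components of $G[V\setminus S]$; $S$ is a minimal separator if it is a separator and no proper subset of $S$ is a separator. The vertex connectivity $\kappa(G)$ is the minimum cardinality of a separator of $G$. A vertex is universal if it is adjacent to all other vertices. *)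

From HB Require Import structures.
From mathcomp Require Import all_boot all_order all_algebra all_field.
Set Implicit Arguments. Unset Strict Implicit. Unset Printing Implicit Defensive.
Import Order.TTheory GRing.Theory Num.Theory.

Section Graphs.
Variable n : nat.
Variable adj : rel 'I_n.

Definition simple_graph : Prop := symmetric adj /\ irreflexive adj.

Definition connected_graph : Prop := forall x y : 'I_n, connect adj x y.

Definition complete_graph : Prop := forall x y : 'I_n, x != y -> adj x y.

Definition universal (v : 'I_n) : bool := [forall w, (w != v) ==> adj v w].

Definition graph_cycle (c : seq 'I_n) : bool :=
  [&& 4 <= size c, uniq c & cycle adj c].

Definition has_chord (c : seq 'I_n) : bool :=
  [exists x, exists y,
     [&& x \in c, y \in c, adj x y, y != next c x & x != next c y]].

Definition chordal : Prop := forall c, graph_cycle c -> has_chord c.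

Definition adj_minus (S : {set 'I_n}) : rel 'I_n :=
  [rel u v | [&& adj u v, u \notin S & v \notin S]].

Definition separator (S : {set 'I_n}) : bool :=
  [exists x, exists y,
     [&& x \notin S, y \notin S, connect adj x y & ~~ connect (adj_minus S) x y]].

Definition minimal_separator (S : {set 'I_n}) : bool :=
  separator S && [forall T : {set 'I_n}, (T \proper S) ==> ~~ separator T].

(* vertex connectivity: minimum size of a separator (n - 1 if none, the usual
   convention for complete graphs) *)
Definition vertex_connectivity : nat :=
  \big[minn/n.-1]_(S : {set 'I_n} | separator S) #|S|.

Definition degree (v : 'I_n) : nat := #|[set w | adj v w]|.

Local Open Scope ring_scope.

Definition laplacian : 'M[algC]_n :=
  \matrix_(i, j) (if i == j then (degree i)%:R
                  else if adj i j then -1 else 0).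

(* the Laplacian eigenvalues with multiplicity: the roots of the
   characteristic polynomial (which splits over the algebraically closed algC) *)
Definition laplacian_spectrum : seq algC :=
  sval (closed_field_poly_normal (char_poly laplacian)).

(* mu_1 >= ... >= mu_n (eigenvalues are real, so this order is total on them) *)
Definition laplacian_eigs : seq algC :=
  sort (fun x y => y <= x) laplacian_spectrum.

(* a(G) = mu_{n-1}, i.e. index n-2 (0-based) of the nonincreasing list *)
Definition algebraic_connectivity : algC := nth 0 laplacian_eigs (n - 2)%N.

End Graphs.

From HB Require Import structures.
From mathcomp Require Import all_boot all_order all_algebra all_field.
From mathcomp Require Import ring.
Import Order.TTheory GRing.Theory Num.Theory.

(* Diagonalising the Hermitian Laplacian L by a unitary matrix
   gives the Courant-Fischer characterisation: a positive c is at most a(G) iff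
   c |v|^2 <= v L v^* for every v orthogonal to the all-ones vector
   (le_algebraic_connectivity).  With the energy formula
   2 v L v^* = sum_ij A_ij |v_i - v_j|^2 we then compare with test vectors:
   - a set S of universal vertices gives the bound |S| (universal_rayleigh);
   - for a separator S, Fiedler's vector (|R| on the component C of a vertex w
     in G - S, -|C| on the rest R of G - S, 0 on S) shows a(G) <= |S|, and
     a(G) < |S| if some vertex of S misses w (separator_joined).  A universal vertex lies in every separator; in a
   chordal graph, a separator joined to every vertex outside it consists of
   universal vertices (a 4-cycle through two separated vertices has a chord);
   some separator of minimum size has size kappa(G).
   The theorem combines both sides for a minimum separator S0. *)

Set Implicit Arguments.
Unset Strict Implicit.
Unset Printing Implicit Defensive.

Section Preliminaries.
Local Open Scope ring_scope.

Lemma bigmin_le (I : finType) (P : pred I) (F : I -> nat) m i :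
  P i -> (\big[minn/m]_(j | P j) F j <= F i)%N.
Proof.
move=> Pi; have := mem_index_enum i.
elim: (index_enum I) => //= a r IH; rewrite inE big_cons => /orP [/eqP <- | ir].
  by rewrite Pi geq_minl.
by case: (P a); rewrite ?(leq_trans (geq_minr _ _)) ?IH.
Qed.

Lemma sum_indicator (T : finType) (A : {set T}) :
  \sum_u (u \in A)%:R = #|A|%:R :> algC.
Proof.
rewrite -sum1_card natr_sum [RHS]big_mkcond /=; apply: eq_bigr => u _.
by case: (u \in A).
Qed.

Lemma char_poly_similar n (Q M : 'M[algC]_n) : Q \in unitmx ->
  char_poly (invmx Q *m M *m Q) = char_poly M.
Proof.
move=> Qu; rewrite /char_poly /char_poly_mx.
set Qp := map_mx polyC Q; set Qi := map_mx polyC (invmx Q).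
have QiQ : Qi *m Qp = 1%:M by rewrite -map_mxM mulVmx // map_mx1.
have -> : 'X%:M - map_mx polyC (invmx Q *m M *m Q) =
          Qi *m ('X%:M - map_mx polyC M) *m Qp.
  rewrite !map_mxM mulmxBr mulmxBl -/Qp -/Qi; congr (_ - _).
  by rewrite scalar_mxC -mulmxA QiQ mulmx1.
have detQ : \det Qi * \det Qp = 1 by rewrite -det_mulmx QiQ det1.
by rewrite !det_mulmx mulrAC detQ mul1r.
Qed.

End Preliminaries.

Section RayleighQuotient.
Local Open Scope ring_scope.
Local Open Scope sesquilinear_scope.
Variable n : nat.

Definition quad_form (A : 'M[algC]_n) (v : 'rV_n) : algC := (v *m A *m v^t*) 0 0.
Definition sqnorm (v : 'rV[algC]_n) : algC := (v *m v^t*) 0 0.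
Definition ones : 'rV[algC]_n := const_mx 1.
Definition entry_sum (v : 'rV[algC]_n) : algC := (v *m ones^t*) 0 0.

Lemma inner_sumE (w u : 'rV[algC]_n) : (w *m u^t*) 0 0 = \sum_k w 0 k * (u 0 k)^*.
Proof. by rewrite !mxE; apply: eq_bigr => k _; rewrite !mxE. Qed.

Lemma sqnormE (v : 'rV[algC]_n) : sqnorm v = \sum_k v 0 k * (v 0 k)^*.
Proof. exact: inner_sumE. Qed.

Lemma entry_sumE (v : 'rV[algC]_n) : entry_sum v = \sum_k v 0 k.
Proof.
by rewrite /entry_sum inner_sumE; apply: eq_bigr => k _; rewrite mxE conjC1 mulr1.
Qed.

Lemma inner_unitary (P : 'M[algC]_n) (u1 u2 : 'rV[algC]_n) : P \is unitarymx ->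
  u1 *m P^t* *m (u2 *m P^t*)^t* = u1 *m u2^t*.
Proof. by move=> Pu; rewrite trmx_mul map_mxM trmxCK mulmxA mulmxKtV. Qed.

Lemma sum_supp2 (i j : 'I_n) (F : 'I_n -> algC) : i != j ->
  (forall k, k != i -> k != j -> F k = 0) -> \sum_k F k = F i + F j.
Proof.
move=> ij F0; rewrite (bigD1 i) //= (bigD1 j) 1?eq_sym //= big1 ?addr0 //.
by move=> k /andP [ki kj]; apply: F0.
Qed.

Variables (A P : 'M[algC]_n) (D : 'rV[algC]_n).
Hypothesis P_unitary : P \is unitarymx.
Hypothesis A_diag : A = P^t* *m diag_mx D *m P.

Lemma quad_form_eigenbasis v : let w := v *m P^t* in
  quad_form A v = \sum_k D 0 k * (w 0 k * (w 0 k)^*).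
Proof.
move=> w; rewrite /quad_form A_diag.
have -> : v *m (P^t* *m diag_mx D *m P) *m v^t* = w *m diag_mx D *m w^t*.
  by rewrite /w trmx_mul map_mxM trmxCK !mulmxA.
by rewrite inner_sumE; apply: eq_bigr => k _; rewrite mul_mx_diag mxE mulrAC mulrC.
Qed.

Lemma sqnorm_eigenbasis v : let w := v *m P^t* in
  sqnorm v = \sum_k w 0 k * (w 0 k)^*.
Proof. by rewrite /sqnorm -(inner_unitary v v P_unitary) inner_sumE. Qed.

Let y := ones *m P^t*.

Lemma entry_sum_eigenbasis v : entry_sum v = \sum_k (v *m P^t*) 0 k * (y 0 k)^*.
Proof. by rewrite /entry_sum -(inner_unitary v ones P_unitary) inner_sumE. Qed.

Lemma ones_coords_kernel : ones *m A = 0 -> forall k, D 0 k * y 0 k = 0.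
Proof.
move=> oA k.
have yD : y *m diag_mx D = 0.
  have yDP : y *m diag_mx D *m P = 0.
    by rewrite /y -!mulmxA [P^t* *m _]mulmxA -A_diag oA.
  by rewrite -(mulmxtVK (y *m diag_mx D) P_unitary) yDP mul0mx.
by move/matrixP: yD => /(_ 0 k); rewrite mul_mx_diag !mxE mulrC.
Qed.

Lemma ones_coord_nonzero : (0 < n)%N -> exists j, y 0 j != 0.
Proof.
move=> n0; have [j yj|y0] := pickP (fun j => y 0 j != 0); first by exists j.
have yE : y = 0.
  by apply/matrixP => i k; rewrite [i]ord1 [RHS]mxE; apply/eqP/negbFE; exact: y0.
have : ones = 0 :> 'rV_n by rewrite -(mulmxKtV ones P_unitary) // -/y yE mul0mx.
by move/matrixP => /(_ 0 (Ordinal n0)); rewrite !mxE => /eqP; rewrite oner_eq0.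
Qed.

(* Rayleigh lower bound: if ones is in the kernel of A, the eigenvalues are
   real and at most one of them is below c > 0, then c |v|^2 <= v A v^* for
   every v orthogonal to ones (v has no component on the eigenvalue 0). *)
Lemma rayleigh_lower_bound (c : algC) :
  (0 < n)%N -> ones *m A = 0 -> (forall k, D 0 k \is Num.real) -> 0 < c ->
  (forall i j, D 0 i < c -> D 0 j < c -> i = j) ->
  forall v, entry_sum v = 0 -> c * sqnorm v <= quad_form A v.
Proof.
move=> n0 oA DR c0 small_uniq v sv0; set w := v *m P^t*.
have cR : c \is Num.real by rewrite gtr0_real.
have yD := ones_coords_kernel oA.
have [j yj] := ones_coord_nonzero n0.
have Dj0 : D 0 j = 0 by move/eqP: (yD j); rewrite mulf_eq0 (negbTE yj) orbF => /eqP.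
have Dj : D 0 j < c by rewrite Dj0.
have y_supp : forall i, i != j -> y 0 i = 0.
  move=> i ij; have [Di|nDi] := boolP (D 0 i < c).
    by rewrite (small_uniq _ _ Di Dj) eqxx in ij.
  have Dpos : 0 < D 0 i by apply: (lt_le_trans c0); rewrite real_leNgt ?DR.
  by move/eqP: (yD i); rewrite mulf_eq0 gt_eqF //= => /eqP.
have wj : w 0 j = 0.
  move: sv0; rewrite entry_sum_eigenbasis -/w (bigD1 j) //= big1 ?addr0.
    by move/eqP; rewrite mulf_eq0 conjC_eq0 (negbTE yj) orbF => /eqP.
  by move=> i ij; rewrite y_supp // conjC0 mulr0.
rewrite quad_form_eigenbasis sqnorm_eigenbasis -/w mulr_sumr; apply: ler_sum => k _.
have [Dk|nDk] := boolP (D 0 k < c).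
  by rewrite (small_uniq _ _ Dk Dj) wj mul0r !mulr0.
by apply: ler_wpM2r; rewrite ?mul_conjC_ge0 // real_leNgt ?DR.
Qed.

Lemma orthogonal_pair (i j : 'I_n) :
  exists a b : algC, (a != 0) || (b != 0) /\ a * (y 0 i)^* + b * (y 0 j)^* = 0.
Proof.
have [/andP [/eqP yi0 /eqP yj0]|y_nz] := boolP ((y 0 i == 0) && (y 0 j == 0)).
  by exists 1, 0; rewrite oner_eq0 yi0 yj0 conjC0 !mulr0 addr0.
exists (y 0 j)^*, (- (y 0 i)^*); split; last by rewrite mulNr mulrC subrr.
by rewrite oppr_eq0 !conjC_eq0 orbC -negb_and.
Qed.

(* Conversely, a Rayleigh lower bound c on the vectors orthogonal to ones
   leaves at most one eigenvalue below c: two of them would span such a vector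
   of Rayleigh quotient < c. *)
Lemma rayleigh_few_small (c : algC) :
  (forall v, entry_sum v = 0 -> c * sqnorm v <= quad_form A v) ->
  forall i j, D 0 i < c -> D 0 j < c -> i = j.
Proof.
move=> bound i j Di Dj; apply/eqP; apply: contraT => ij.
have [a [b [ab0 ab_orth]]] := orthogonal_pair i j.
pose w : 'rV[algC]_n := \row_k (if k == i then a else if k == j then b else 0).
have wi : w 0 i = a by rewrite mxE eqxx.
have wj : w 0 j = b by rewrite mxE eq_sym (negbTE ij) eqxx.
have w_supp k : k != i -> k != j -> w 0 k = 0.
  by move=> ki kj; rewrite mxE (negbTE ki) (negbTE kj).
have vw : w *m P *m P^t* = w by rewrite mulmxtVK.
have := bound (w *m P).
rewrite entry_sum_eigenbasis quad_form_eigenbasis sqnorm_eigenbasis vw.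
rewrite !(sum_supp2 ij); try by move=> k ki kj; rewrite w_supp ?mul0r ?mulr0.
rewrite wi wj ab_orth => /(_ erefl).
set fa := a * _; set fb := b * _.
have fa0 : 0 <= fa by rewrite mul_conjC_ge0.
have fb0 : 0 <= fb by rewrite mul_conjC_ge0.
suff : D 0 i * fa + D 0 j * fb < c * (fa + fb) by move=> /lt_geF ->.
rewrite mulrDr; case/orP: ab0 => [a0|b0].
  apply: ltr_leD; first by rewrite ltr_pM2r // /fa mul_conjC_gt0.
  by apply: ler_wpM2r => //; exact: ltW.
apply: ler_ltD; last by rewrite ltr_pM2r // /fb mul_conjC_gt0.
by apply: ler_wpM2r => //; exact: ltW.
Qed.

End RayleighQuotient.

Section SecondSmallest.
Local Open Scope ring_scope.
Variable rs : seq algC.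
Hypothesis rs_real : all (fun z => z \is Num.real) rs.
Hypothesis rs_size : (1 < size rs)%N.

(* The second smallest element of a list of reals, listed nonincreasingly
   as in the definition of the algebraic connectivity. *)
Let a := nth 0 (sort (fun x y => y <= x) rs) (size rs - 2).

Lemma second_smallest_split :
  exists b t, [/\ perm_eq rs (b :: a :: t), b <= a & all (fun z => a <= z) t].
Proof.
rewrite /a; set s := sort _ rs.
have s_sorted : sorted (fun x y : algC => y <= x) s.
  apply: (sort_sorted_in (P := fun z : algC => z \is Num.real)) rs_real.
  by move=> x z xR zR; rewrite /= real_leVge.
have s_perm : perm_eq rs (rev s) by rewrite perm_sym perm_rev perm_sort.
have aE : nth 0 s (size rs - 2) = nth 0 (rev s) 1.
  by rewrite nth_rev size_sort // -subn1 -subnDA.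
have : sorted <=%R (rev s) by rewrite rev_sorted.
have : (1 < size (rev s))%N by rewrite size_rev size_sort.
rewrite aE; case: (rev s) s_perm => [|b [|a' t]] //= s_perm _ /andP [ba'].
rewrite path_sortedE; last exact: le_trans.
by case/andP=> t_ge _; exists b, t.
Qed.

Lemma second_smallest_real : a \is Num.real.
Proof.
have [b [t [rs_perm _ _]]] := second_smallest_split.
by move/allP: rs_real; apply; rewrite (perm_mem rs_perm) !inE eqxx orbT.
Qed.

Lemma le_second_smallest (c : algC) : c \is Num.real ->
  (c <= a) = (count (fun z => (z < c)%R) rs <= 1)%N.
Proof.
move=> cR; have [b [t [rs_perm ba t_ge]]] := second_smallest_split.
have t_small0 : c <= a -> count (fun z => z < c) t = 0%N.
  move=> ca; apply/eqP; rewrite -leqn0 leqNgt -has_count; apply/hasPn => z zt.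
  by rewrite le_gtF // (le_trans ca) //; move/allP: t_ge; apply.
rewrite (permP rs_perm) /=; apply/idP/idP => [ca|].
  by rewrite t_small0 // (le_gtF ca); case: (b < c).
rewrite real_leNgt ?second_smallest_real //; apply: contraTN => ac.
by rewrite ac (le_lt_trans ba ac).
Qed.

End SecondSmallest.

Section Laplacian.
Local Open Scope ring_scope.
Local Open Scope sesquilinear_scope.
Variables (n : nat) (adj : rel 'I_n).
Hypotheses (adj_sym : symmetric adj) (adj_irr : irreflexive adj).

Let L := laplacian adj.

Lemma degreeE i : (degree adj i)%:R = \sum_j (adj i j)%:R :> algC.
Proof.
rewrite /degree -sum1_card natr_sum big_mkcond /=; apply: eq_bigr => j _.
by rewrite inE; case: (adj i j).
Qed.

Lemma laplacianE i j : L i j = (i == j)%:R * (degree adj i)%:R - (adj i j)%:R.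
Proof.
rewrite /L /laplacian mxE; case: eqVneq => [->|ij]; first by rewrite adj_irr mul1r subr0.
by rewrite mul0r sub0r; case: (adj i j); rewrite ?oppr0.
Qed.

Lemma laplacian_hermitian : L \is hermsymmx.
Proof.
apply: realsym_hermsym.
  rewrite is_hermitianmxE expr0 scale1r; apply/eqP/matrixP => i j.
  by rewrite /L /laplacian !mxE adj_sym eq_sym; case: eqVneq => // ->.
apply/mxOverP => i j; rewrite /L /laplacian mxE; case: ifP => _; first exact: realn.
by case: ifP => _; rewrite ?rpredN ?real1 ?real0.
Qed.

Lemma laplacian_ones : ones n *m L = 0.
Proof.
apply/matrixP => i j; rewrite !mxE.
under eq_bigr => l _ do rewrite mxE mul1r laplacianE.
rewrite sumrB (bigD1 j) //= eqxx mul1r big1 ?addr0; last first.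
  by move=> l lj; rewrite (negbTE lj) mul0r.
rewrite degreeE; apply/eqP; rewrite subr_eq0; apply/eqP/eq_bigr => l _.
by rewrite adj_sym.
Qed.

Let P := spectralmx L.
Let D := spectral_diag L.

Lemma laplacian_unitary : P \is unitarymx.
Proof. exact: spectral_unitarymx. Qed.

Lemma laplacian_diag : L = P^t* *m diag_mx D *m P.
Proof.
rewrite -invmx_unitary ?laplacian_unitary //.
by apply/orthomx_spectralP/hermitian_normalmx/laplacian_hermitian.
Qed.

Lemma laplacian_eig_real i : D 0 i \is Num.real.
Proof. by move/mxOverP: (hermitian_spectral_diag_real laplacian_hermitian); apply. Qed.

Lemma laplacian_spectrum_perm :
  perm_eq (laplacian_spectrum adj) [seq D 0 i | i <- enum 'I_n].
Proof.
apply: prod_XsubC_eq; rewrite /laplacian_spectrum.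
case: closed_field_poly_normal => rs /= rsE.
move: rsE; rewrite (monicP (char_poly_monic _)) scale1r => <-.
rewrite -/L {1}laplacian_diag -invmx_unitary ?laplacian_unitary //.
rewrite char_poly_similar ?spectral_unit // char_poly_trig ?diag_mx_is_trig //.
rewrite big_map big_enum /=; apply: eq_bigr => i _.
by rewrite mxE eqxx mulr1n.
Qed.

Lemma laplacian_energy v :
  2 * quad_form L v =
  \sum_i \sum_j (adj i j)%:R * ((v 0 i - v 0 j) * (v 0 i - v 0 j)^*).
Proof.
have qE : quad_form L v =
    \sum_i \sum_j (adj i j)%:R * (v 0 i * (v 0 i)^* - v 0 i * (v 0 j)^*).
  rewrite /quad_form inner_sumE.
  under eq_bigr => j _ do rewrite mxE mulr_suml.
  rewrite exchange_big /=; apply: eq_bigr => i _.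
  under eq_bigr => j _ do rewrite laplacianE mulrBr mulrBl.
  under [RHS]eq_bigr => j _ do rewrite mulrBr.
  rewrite !sumrB; congr (_ - _); last by apply: eq_bigr => j _; ring.
  rewrite -mulr_suml -degreeE (bigD1 i) //= big1 ?addr0.
    by rewrite eqxx mul1r mulrAC mulrC.
  by move=> j ji; rewrite eq_sym (negbTE ji) mul0r mulr0 mul0r.
have qE' : quad_form L v =
    \sum_i \sum_j (adj i j)%:R * (v 0 j * (v 0 j)^* - v 0 j * (v 0 i)^*).
  rewrite qE exchange_big /=; apply: eq_bigr => i _; apply: eq_bigr => j _.
  by rewrite adj_sym.
rewrite -[X in X * _]/(1 + 1) mulrDl mul1r {1}qE {1}qE' -big_split /=.
apply: eq_bigr => i _; rewrite -big_split /=; apply: eq_bigr => j _.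
by rewrite rmorphB /=; ring.
Qed.

Hypothesis n_gt1 : (1 < n)%N.

Let rs := laplacian_spectrum adj.

Lemma laplacian_spectrum_size : size rs = n.
Proof. by rewrite (perm_size laplacian_spectrum_perm) size_map size_enum_ord. Qed.

Lemma laplacian_spectrum_real : all (fun z => z \is Num.real) rs.
Proof.
rewrite (perm_all _ laplacian_spectrum_perm) all_map.
by apply/allP => i _; exact: laplacian_eig_real.
Qed.

Lemma algebraic_connectivityE :
  algebraic_connectivity adj = nth 0 (sort (fun x y => y <= x) rs) (size rs - 2).
Proof. by rewrite laplacian_spectrum_size. Qed.

Lemma algebraic_connectivity_real : algebraic_connectivity adj \is Num.real.
Proof.
rewrite algebraic_connectivityE second_smallest_real ?laplacian_spectrum_real //.
by rewrite laplacian_spectrum_size.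
Qed.

Lemma le_algebraic_connectivity (c : algC) : 0 < c ->
  c <= algebraic_connectivity adj <->
  (forall v, entry_sum v = 0 -> c * sqnorm v <= quad_form L v).
Proof.
move=> c_gt0.
have few_small : (count (fun z => (z < c)%R) rs <= 1)%N <->
    (forall i j, D 0 i < c -> D 0 j < c -> i = j).
  rewrite (permP laplacian_spectrum_perm) count_map -sum1_count big_enum_cond.
  rewrite sum1_card; split => [/card_le1P small i j Di Dj|small].
    by apply/eqP; rewrite eq_sym -[j == i]/(j \in pred1 i) -(small i Di j).
  apply/card_le1P => i Di j; rewrite inE.
  by apply/idP/idP => [Dj|/eqP -> //]; apply/eqP/esym/small.
rewrite algebraic_connectivityE le_second_smallest ?laplacian_spectrum_real
  ?laplacian_spectrum_size ?gtr0_real // few_small.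
have n_gt0 : (0 < n)%N by apply: ltn_trans n_gt1.
split=> [small v|bound].
  exact: (rayleigh_lower_bound laplacian_unitary laplacian_diag n_gt0
    laplacian_ones laplacian_eig_real c_gt0 small).
exact: (rayleigh_few_small laplacian_unitary laplacian_diag bound).
Qed.

End Laplacian.

Section UniversalBound.
Local Open Scope ring_scope.
Variable n : nat.

Let sqdist (v : 'rV[algC]_n) i j := (v 0 i - v 0 j) * (v 0 i - v 0 j)^*.

Lemma weighted_pair_identity (b u : 'I_n -> algC) : (forall i, (b i)^* = b i) ->
  \sum_i \sum_j b i * b j * ((u i - u j) * (u i - u j)^*) =
  2 * ((\sum_j b j) * \sum_i b i * (u i * (u i)^*))
  - 2 * ((\sum_i b i * u i) * (\sum_i b i * u i)^*).
Proof.
move=> b_real.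
have sum_conj : (\sum_i b i * u i)^* = \sum_i b i * (u i)^*.
  by rewrite rmorph_sum; apply: eq_bigr => i _; rewrite rmorphM /= b_real.
have e1 : (\sum_i b i * (u i * (u i)^*)) * (\sum_j b j) =
          \sum_i \sum_j b i * b j * (u i * (u i)^*).
  by rewrite big_distrlr /=; apply: eq_bigr => i _; apply: eq_bigr => j _; ring.
have e2 : (\sum_j b j) * (\sum_i b i * (u i * (u i)^*)) =
          \sum_i \sum_j b i * b j * (u j * (u j)^*).
  by rewrite big_distrlr /=; apply: eq_bigr => i _; apply: eq_bigr => j _; ring.
have e3 : (\sum_i b i * u i) * (\sum_i b i * u i)^* =
          \sum_i \sum_j b i * b j * (u i * (u j)^*).
  by rewrite sum_conj big_distrlr /=; apply: eq_bigr => i _; apply: eq_bigr => j _; ring.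
have e4 : (\sum_i b i * u i)^* * (\sum_i b i * u i) =
          \sum_i \sum_j b i * b j * (u j * (u i)^*).
  by rewrite sum_conj big_distrlr /=; apply: eq_bigr => i _; apply: eq_bigr => j _; ring.
transitivity ((\sum_i \sum_j b i * b j * (u i * (u i)^*) +
               \sum_i \sum_j b i * b j * (u j * (u j)^*)) -
              (\sum_i \sum_j b i * b j * (u i * (u j)^*) +
               \sum_i \sum_j b i * b j * (u j * (u i)^*))); last first.
  by rewrite -e1 -e2 -e3 -e4; ring.
rewrite -!big_split -sumrB /=; apply: eq_bigr => i _.
rewrite -!big_split -sumrB /=; apply: eq_bigr => j _.
by rewrite rmorphB /=; ring.
Qed.

Lemma complete_energy v : entry_sum v = 0 ->
  \sum_i \sum_j sqdist v i j = 2 * (n%:R * sqnorm v).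
Proof.
move=> sv0.
have sum0 : \sum_i 1 * v 0 i = 0.
  by rewrite -[RHS]sv0 entry_sumE; apply: eq_bigr => i _; rewrite mul1r.
have := @weighted_pair_identity (fun _ => 1) (fun i => v 0 i) (fun _ => @conjC1 _).
rewrite /= sum0 mul0r mulr0 subr0 sumr_const card_ord sqnormE.
move=> E; rewrite -[X in _ = 2 * (_ * X)](eq_bigr _ (fun i _ => mul1r _)) -E.
by apply: eq_bigr => i _; apply: eq_bigr => j _; rewrite !mul1r.
Qed.

Lemma sqdist_ge0 v i j : 0 <= sqdist v i j.
Proof. exact: mul_conjC_ge0. Qed.

Lemma outside_energy_le (S : {set 'I_n}) v :
  \sum_i \sum_j (i \notin S)%:R * (j \notin S)%:R * sqdist v i j
  <= 2 * (#|~: S|%:R * sqnorm v).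
Proof.
pose b i : algC := (i \notin S)%:R.
have sum_b : \sum_j b j = #|~: S|%:R.
  rewrite -sum1_card natr_sum [RHS]big_mkcond; apply: eq_bigr => j _.
  by rewrite /b inE; case: (j \in S).
rewrite (@weighted_pair_identity b (fun i => v 0 i) (fun i => conjC_nat _ _)) sum_b.
apply: (@le_trans _ _ (2 * (#|~: S|%:R * \sum_i b i * (v 0 i * (v 0 i)^*)))).
  by rewrite lerBlDr lerDl pmulr_rge0 ?mul_conjC_ge0.
rewrite ler_pM2l // ler_wpM2l // sqnormE; apply: ler_sum => i _.
by rewrite /b; case: (i \in S); rewrite /= ?mul1r ?mul0r ?mul_conjC_ge0.
Qed.

Variable adj : rel 'I_n.
Hypothesis adj_sym : symmetric adj.
Hypothesis adj_irr : irreflexive adj.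

Lemma universal_pair_term (S : {set 'I_n}) v i j :
  (forall s, s \in S -> universal adj s) ->
  (1 - (i \notin S)%:R * (j \notin S)%:R) * sqdist v i j <= (adj i j)%:R * sqdist v i j.
Proof.
move=> univS; have [->|ij] := eqVneq i j; first by rewrite /sqdist subrr !mul0r !mulr0.
have edge_at s k : s \in S -> k != s -> adj s k.
  by move=> sS ks; move/forallP: (univS s sS) => /(_ k); rewrite ks.
case iS: (i \in S); first by rewrite (edge_at i j) // 1?eq_sym //= mul0r subr0.
case jS: (j \in S); first by rewrite adj_sym (edge_at j i) //= mulr0 subr0.
by rewrite /= mul1r subrr mul0r mulr_ge0 ?ler0n ?sqdist_ge0.
Qed.

(* A set S of universal vertices forces the Rayleigh bound |S|: the edges
   touching S contain the complete graph minus the complete graph on V \ S. *)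
Lemma universal_rayleigh (S : {set 'I_n}) :
  (forall s, s \in S -> universal adj s) ->
  forall v, entry_sum v = 0 -> #|S|%:R * sqnorm v <= quad_form (laplacian adj) v.
Proof.
move=> univS v sv0; rewrite -(ler_pM2l (x := 2)) // laplacian_energy //.
apply: (@le_trans _ _ (\sum_i \sum_j (1 - (i \notin S)%:R * (j \notin S)%:R)
    * sqdist v i j)); last first.
  by apply: ler_sum => i _; apply: ler_sum => j _; apply: universal_pair_term.
under eq_bigr => i _ do under eq_bigr => j _ do rewrite mulrBl mul1r.
under eq_bigr => i _ do rewrite sumrB.
rewrite sumrB complete_energy // lerBrDr -lerBrDl.
apply: le_trans (outside_energy_le S v) _.
have cardE : n%:R = #|S|%:R + #|~: S|%:R :> algC by rewrite -natrD cardsC card_ord.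
by rewrite cardE le_eqVlt; apply/orP; left; apply/eqP; ring.
Qed.

End UniversalBound.

Section Separators.
Variables (n : nat) (adj : rel 'I_n).
Hypotheses (adj_sym : symmetric adj) (adj_irr : irreflexive adj).

Lemma adj_minus_sym (S : {set 'I_n}) : symmetric (adj_minus adj S).
Proof.
move=> x y; rewrite /adj_minus /= adj_sym.
by case: (adj y x); case: (x \in S); case: (y \in S).
Qed.

Lemma separatorP (S : {set 'I_n}) : separator adj S ->
  exists x y, [/\ x \notin S, y \notin S & ~~ connect (adj_minus adj S) x y].
Proof. by case/existsP=> x /existsP [y /and4P [xS yS _ xy]]; exists x, y. Qed.

Lemma set0_not_separator : ~~ separator adj set0.
Proof.
apply/existsP => [[x /existsP [y /and4P [_ _ xy]]]].
by rewrite (@eq_connect _ _ adj) ?xy // => a b; rewrite /adj_minus /= !inE !andbT.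
Qed.

(* A universal vertex lies in every separator: otherwise it would link
   every remaining pair. *)
Lemma universal_in_separator (S : {set 'I_n}) u :
  separator adj S -> universal adj u -> u \in S.
Proof.
move=> /separatorP [x [y [xS yS xy]]] /forallP u_univ; apply: contraR xy => uS.
have to_u z : z \notin S -> connect (adj_minus adj S) z u.
  move=> zS; have [->|zu] := eqVneq z u; first exact: connect0.
  apply: connect1; rewrite /adj_minus /= zS uS adj_sym !andbT.
  by have := u_univ z; rewrite zu.
by rewrite (connect_trans (to_u x xS)) // (sym_connect_sym (adj_minus_sym S)) to_u.
Qed.

Lemma chordal_square_chord (s x t y : 'I_n) : chordal adj ->
  uniq [:: s; x; t; y] -> adj s x -> adj x t -> adj t y -> adj y s ->
  adj s t || adj x y.
Proof.
move=> chordalG sxty sx xt ty ys.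
have square : graph_cycle adj [:: s; x; t; y] by rewrite /graph_cycle sxty /= sx xt ty ys.
have /existsP [u /existsP [v /and5P [uc vc uv vnu unv]]] := chordalG _ square.
move: sxty; rewrite /= !inE !negb_or.
case/and4P => /and3P [sx' st' sy'] /andP [xt' xy'] ty' _.
have xs' : x != s by rewrite eq_sym.
have ts' : t != s by rewrite eq_sym.
have ys' : y != s by rewrite eq_sym.
have tx' : t != x by rewrite eq_sym.
have yx' : y != x by rewrite eq_sym.
have yt' : y != t by rewrite eq_sym.
move: uc vc vnu unv uv; rewrite !inE.
case/or4P => /eqP ->; case/or4P => /eqP ->;
  rewrite /next /= ?eqxx ?(negbTE sx') ?(negbTE st') ?(negbTE sy') ?(negbTE xt')
     ?(negbTE xy') ?(negbTE ty') ?(negbTE xs') ?(negbTE ts') ?(negbTE ys')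
     ?(negbTE tx') ?(negbTE yx') ?(negbTE yt') ?adj_irr //=.
all: try by move=> _ _ ->.
all: try by move=> _ _; rewrite adj_sym => ->; rewrite ?orbT.
all: by rewrite ?eqxx.
Qed.

(* In a chordal graph, a separator S all of whose vertices see all of V \ S
   consists of universal vertices: two nonadjacent s, w in S would form a
   chordless 4-cycle with two vertices separated by S. *)
Lemma joined_separator_universal (S : {set 'I_n}) : chordal adj -> separator adj S ->
  (forall s w, s \in S -> w \notin S -> adj s w) ->
  forall s, s \in S -> universal adj s.
Proof.
move=> chordalG /separatorP [x [y [xS yS xy]]] joined s sS.
apply/forallP => w; apply/implyP => ws.
have [wS|] := boolP (w \in S); last exact: joined.
have out_neq u z : u \in S -> z \notin S -> u != z.
  by move=> uS zS; apply: contraNneq zS => <-.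
have sxwy : uniq [:: s; x; w; y].
  rewrite /= !inE !negb_or (out_neq s x) // (out_neq s y) // eq_sym ws.
  rewrite eq_sym (out_neq w x) // (out_neq w y) //= andbT.
  by apply: contraNneq xy => ->; exact: connect0.
have := chordal_square_chord chordalG sxwy (joined s x sS xS).
rewrite adj_sym (joined w x wS xS) (joined w y wS yS) adj_sym (joined s y sS yS).
case/(_ erefl erefl erefl)/orP => // x_y; move: xy.
by rewrite (connect1 (e := adj_minus adj S) (x := x) (y := y)) // /adj_minus /= x_y xS yS.
Qed.

Lemma vertex_connectivity_le (T : {set 'I_n}) :
  separator adj T -> (vertex_connectivity adj <= #|T|)%N.
Proof. exact: bigmin_le. Qed.

Lemma nonedge_separator (x y : 'I_n) : connected_graph adj -> x != y -> ~~ adj x y ->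
  separator adj (~: [set x; y]).
Proof.
move=> connG xy nxy; apply/existsP; exists x; apply/existsP; exists y.
rewrite !inE !eqxx orbT connG /=; apply/negP => /connectP [[|z p]] /=.
  by move=> _ yx; move: xy; rewrite yx eqxx.
case/andP => /and3P [xz _ zS] _ _; move: zS; rewrite !inE negbK.
by case/orP => /eqP zE; move: xz; rewrite zE ?adj_irr // (negbTE nxy).
Qed.

Lemma minimum_minimal_separator (S : {set 'I_n}) : separator adj S ->
  (forall T, separator adj T -> (#|S| <= #|T|)%N) -> minimal_separator adj S.
Proof.
move=> sepS minS; apply/andP; split=> //; apply/forallP => T; apply/implyP => TS.
by apply/negP => /minS; rewrite leqNgt proper_card.
Qed.

Lemma minimum_separator : connected_graph adj -> ~ complete_graph adj ->
  exists S, [/\ separator adj S, #|S| = vertex_connectivity adj &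
            forall T, separator adj T -> (#|S| <= #|T|)%N].
Proof.
move=> connG not_complete.
have [x [y [xy nxy]]] : exists x y, x != y /\ ~~ adj x y.
  have [/existsP [x /existsP [y /andP [xy nxy]]]|none] :=
    boolP [exists x, exists y, (x != y) && ~~ adj x y]; first by exists x, y.
  case: not_complete => a b ab; apply/negPn/negP => nab; move/negP: none; apply.
  by apply/existsP; exists a; apply/existsP; exists b; rewrite ab.
have sep0 := nonedge_separator connG xy nxy.
have [S sepS minS] := arg_minnP (fun T : {set 'I_n} => #|T|) sep0.
exists S; split => //; apply/eqP; rewrite eqn_leq vertex_connectivity_le // andbT.
apply: (big_ind (fun m => #|S| <= m)%N) => [|a b Sa Sb|T];
  [|by rewrite leq_min Sa Sb|exact: minS].
have : (#|~: [set x; y]| < #|[set: 'I_n]|)%N.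
  by apply: proper_card; rewrite properT; apply/eqP => /setP /(_ x); rewrite !inE eqxx.
rewrite cardsT card_ord => lt_n; rewrite -ltnS prednK ?(leq_ltn_trans (leq0n _) lt_n) //.
exact: leq_ltn_trans (minS _ sep0) lt_n.
Qed.

End Separators.

Section SeparatorTestVector.
Local Open Scope ring_scope.
Variables (n : nat) (adj : rel 'I_n).
Hypotheses (adj_sym : symmetric adj) (adj_irr : irreflexive adj).

Lemma component_outside (S : {set 'I_n}) w u :
  w \notin S -> connect (adj_minus adj S) w u -> u \notin S.
Proof.
move=> wS; rewrite (sym_connect_sym (adj_minus_sym adj_sym S)).
by case/connectP => [[|z p]] /= => [_ <-|/andP [/and3P []]].
Qed.

Variables (S : {set 'I_n}) (w x0 y0 : 'I_n).
Hypotheses (wS : w \notin S) (x0S : x0 \notin S) (y0S : y0 \notin S).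
Hypothesis x0y0_sep : ~~ connect (adj_minus adj S) x0 y0.

Let C := [set u | connect (adj_minus adj S) w u].
Let R := [set u | (u \notin S) && (u \notin C)].

Let v : 'rV[algC]_n :=
  \row_u (if u \in C then #|R|%:R else if u \in S then 0 else - #|C|%:R).

Let sqdist i j := (v 0 i - v 0 j) * (v 0 i - v 0 j)^*.

Lemma test_vector_on_S u : u \in S -> v 0 u = 0.
Proof.
move=> uS; rewrite mxE uS; case: ifP => // uC.
by move: uC; rewrite inE => /(component_outside wS); rewrite uS.
Qed.

Lemma test_vector_w : v 0 w = #|R|%:R.
Proof. by rewrite mxE inE connect0. Qed.

Lemma rest_nonempty : (0 < #|R|)%N.
Proof.
apply/card_gt0P.
have [xC|] := boolP (x0 \in C); last by exists x0; rewrite inE x0S.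
have [yC|] := boolP (y0 \in C); last by exists y0; rewrite inE y0S.
rewrite !inE in xC yC; case/negP: x0y0_sep.
by apply: connect_trans yC; rewrite (sym_connect_sym (adj_minus_sym adj_sym S)).
Qed.

Lemma test_vector_sum : entry_sum v = 0.
Proof.
rewrite entry_sumE.
transitivity (\sum_u ((u \in C)%:R * #|R|%:R - (u \in R)%:R * #|C|%:R : algC)).
  apply: eq_bigr => u _; rewrite mxE [u \in R]inE.
  by case: (u \in C); case: (u \in S); rewrite /= ?mul1r ?mul0r ?subr0 ?sub0r.
by rewrite sumrB -!mulr_suml !sum_indicator mulrC subrr.
Qed.

Lemma test_vector_sqnorm_gt0 : 0 < sqnorm v.
Proof.
rewrite sqnormE (bigD1 w) //= test_vector_w.
apply: ltr_pwDl; last by apply: sumr_ge0 => i _; rewrite mul_conjC_ge0.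
by rewrite mul_conjC_gt0 pnatr_eq0 -lt0n rest_nonempty.
Qed.

(* Edge-by-edge comparison: v is constant on each component of G - S, so only
   edges touching S contribute, and each is bounded by the S-endpoint term. *)
Let bound_term i j :=
  (i \in S)%:R * (v 0 j * (v 0 j)^*) + (j \in S)%:R * (v 0 i * (v 0 i)^*).

Lemma bound_term_ge0 i j : 0 <= bound_term i j.
Proof. by rewrite addr_ge0 // mulr_ge0 ?ler0n ?mul_conjC_ge0. Qed.

Lemma test_vector_edge_term i j : (adj i j)%:R * sqdist i j <= bound_term i j.
Proof.
case ij: (adj i j); last by rewrite mul0r bound_term_ge0.
rewrite mul1r /sqdist /bound_term.
case iS: (i \in S); case jS: (j \in S).
- by rewrite !test_vector_on_S // subrr !(mul0r, mulr0, addr0).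
- by rewrite (test_vector_on_S iS) sub0r rmorphN mulrNN mul1r mul0r addr0.
- by rewrite (test_vector_on_S jS) subr0 mul0r mul1r add0r.
have ij_out : adj_minus adj S i j by rewrite /adj_minus /= ij iS jS.
have sameC : (i \in C) = (j \in C).
  rewrite !inE; apply/idP/idP => [wi|wj]; first exact: connect_trans wi (connect1 ij_out).
  by apply: connect_trans wj (connect1 _); rewrite (adj_minus_sym adj_sym).
by rewrite !mxE sameC iS jS subrr !mul0r addr0.
Qed.

Lemma bound_term_sum : \sum_i \sum_j bound_term i j = 2 * (#|S|%:R * sqnorm v).
Proof.
under eq_bigr => i _ do rewrite big_split /=.
rewrite big_split /= sqnormE.
under [X in X + _]eq_bigr => i _ do rewrite -mulr_sumr -sqnormE.
under [X in _ + X]eq_bigr => i _ do rewrite -mulr_suml sum_indicator.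
by rewrite -mulr_suml -mulr_sumr sum_indicator -sqnormE; ring.
Qed.

Lemma test_vector_gap :
  2 * (#|S|%:R * sqnorm v - quad_form (laplacian adj) v) =
  \sum_i \sum_j (bound_term i j - (adj i j)%:R * sqdist i j).
Proof.
rewrite mulrBr laplacian_energy // -bound_term_sum -sumrB.
by apply: eq_bigr => i _; rewrite sumrB.
Qed.

Lemma separator_test_vector :
  exists v : 'rV[algC]_n, [/\ entry_sum v = 0, 0 < sqnorm v,
     quad_form (laplacian adj) v <= #|S|%:R * sqnorm v &
     forall s, s \in S -> ~~ adj s w ->
       quad_form (laplacian adj) v < #|S|%:R * sqnorm v].
Proof.
have gap_ge0 i j : 0 <= bound_term i j - (adj i j)%:R * sqdist i j.
  by rewrite subr_ge0 test_vector_edge_term.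
exists v; split; [exact: test_vector_sum | exact: test_vector_sqnorm_gt0 | |].
  rewrite -subr_ge0 -(pmulr_rge0 _ (ltr0Sn _ 1)) test_vector_gap.
  by apply: sumr_ge0 => i _; apply: sumr_ge0.
move=> s sS sw; rewrite -subr_gt0 -(pmulr_rgt0 _ (ltr0Sn _ 1)) test_vector_gap.
rewrite (bigD1 s) //=; apply: ltr_pwDl; last by apply: sumr_ge0 => i _; exact: sumr_ge0.
rewrite (bigD1 w) //=; apply: ltr_pwDl; last exact: sumr_ge0.
rewrite (negbTE sw) mul0r subr0 /bound_term sS (negbTE wS) mul0r addr0 mul1r.
by rewrite test_vector_w mul_conjC_gt0 pnatr_eq0 -lt0n rest_nonempty.
Qed.

End SeparatorTestVector.

Section ConnectivityBounds.
Local Open Scope ring_scope.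
Variables (n : nat) (adj : rel 'I_n).
Hypotheses (adj_sym : symmetric adj) (adj_irr : irreflexive adj).
Variable S : {set 'I_n}.
Hypothesis S_sep : separator adj S.

Lemma separator_order : (1 < n)%N.
Proof.
have [x [y [_ _ xy]]] := separatorP S_sep.
have xny : x != y by apply: contraNneq xy => ->; exact: connect0.
by have := max_card (mem [set x; y]); rewrite cards2 xny card_ord.
Qed.

Lemma separator_card_gt0 : 0 < #|S|%:R :> algC.
Proof.
by rewrite ltr0n card_gt0; apply: contraTneq S_sep => ->; exact: set0_not_separator.
Qed.

Lemma algebraic_connectivity_le_separator : algebraic_connectivity adj <= #|S|%:R.
Proof.
have n_gt1 := separator_order.
have aR := algebraic_connectivity_real adj_sym n_gt1.
rewrite real_leNgt ?realn //; apply/negP => Sa.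
have a_gt0 : 0 < algebraic_connectivity adj by apply: le_lt_trans Sa.
have [x [y [xS yS xy]]] := separatorP S_sep.
have [v [sv0 v_gt0 vS _]] := separator_test_vector adj_sym adj_irr xS xS yS xy.
have := le_trans ((le_algebraic_connectivity adj_sym adj_irr n_gt1 a_gt0).1
  (lexx _) v sv0) vS.
by rewrite ler_pM2r // => /(lt_le_trans Sa); rewrite ltxx.
Qed.

(* Equality a(G) = |S| forces S to be completely joined to V \ S: a missing
   edge sw would give a test vector of Rayleigh quotient < |S|. *)
Lemma separator_joined : #|S|%:R <= algebraic_connectivity adj ->
  forall s w, s \in S -> w \notin S -> adj s w.
Proof.
move=> Sa s w sS wS; apply: contraT => sw.
have n_gt1 := separator_order.
have S_gt0 := separator_card_gt0.
have [x [y [xS yS xy]]] := separatorP S_sep.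
have [v [sv0 _ _ strict]] := separator_test_vector adj_sym adj_irr wS xS yS xy.
have := (le_algebraic_connectivity adj_sym adj_irr n_gt1 S_gt0).1 Sa v sv0.
by move/(lt_le_trans (strict s sS sw)); rewrite ltxx.
Qed.

End ConnectivityBounds.

Theorem theorem2 (n : nat) (adj : rel 'I_n) :
  simple_graph adj -> connected_graph adj -> chordal adj ->
  ~ complete_graph adj ->
  (((vertex_connectivity adj)%:R)%R = algebraic_connectivity adj :> algC <->
   exists S : {set 'I_n},
     minimal_separator adj S /\ (forall v, v \in S -> universal adj v)).
Proof.
move=> [adj_sym adj_irr] connG chordalG not_complete.
have [S0 [S0_sep <- S0_min]] := minimum_separator adj_irr connG not_complete.
have a_le_S0 := algebraic_connectivity_le_separator adj_sym adj_irr S0_sep.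
split=> [S0_a | [S [/andP [S_sep _] S_univ]]].
  have S0_le_a : (#|S0|%:R <= algebraic_connectivity adj)%R by rewrite S0_a.
  have joined := separator_joined adj_sym adj_irr S0_sep S0_le_a.
  exists S0; split; first exact: minimum_minimal_separator.
  exact: (joined_separator_universal adj_sym adj_irr chordalG S0_sep joined).
have S_card : #|S| = #|S0|.
  apply/eqP; rewrite eqn_leq S0_min // andbT subset_leq_card //.
  by apply/subsetP => u /S_univ; exact: universal_in_separator.
apply/le_anti; rewrite a_le_S0 andbT -S_card.
apply/(le_algebraic_connectivity adj_sym adj_irr (separator_order S0_sep)
  (separator_card_gt0 S_sep)).
exact: universal_rayleigh.
Qed.
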